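(* Let $r,q$ be positive integers, $k\ge1$, $p_1,\dots,p_k\ge1$ integers, and $s_i,a_{ij},\nu$ integers ($1\le i\le k$, $1\le j\le p_i$) with all $a_{ij}>0$. Suppose $B(n)=\lceil rn/q\rceil$ formally satisfies the recursion $R(n)=\sum_{i=1}^k R\big(n-s_i-\sum_{j=1}^{p_i}R(n-a_{ij})\big)+\nu$, and suppose $rp_i/q\le 1$ for all $i$. Then there exist a recursion $R'$ of the same form whose parameter vector is equivalent to that of $R$, and a positive integer $m$, such that $\lceil rn/q\rceil$ is the unique solution generated by $R'$ with initial conditions $R'(t)=\lceil tr/q\rceil$ for $1\le t\le m$. If moreover $rp_i/q<1$ for all $i$, then the same holds for $R$ itself (with some positive integer $m$).
   Context: A sequence $B:\mathbb{Z}\to\mathbb{Z}$ formally satisfies $R$ if for every integer $n$, $B(n)=\sum_{i=1}^k B\big(n-s_i-\sum_{j=1}^{p_i}B(n-a_{ij})\big)+\nu$. The parameter vector of $R$ is $\langle s_1;a_{11},\dots,a_{1p_1}:\cdots:s_k;a_{k1},\dots,a_{kp_k}|\nu\rangle$; equivalence of parameter vectors (with the same $k,p_i$) is the equivalence relation generated by the moves (i) replace $s_i$ by $s_i+dr$ and one $a_{ij}$ by $a_{ij}+dq$ ($d\in\mathbb{Z}$), and (ii) replace $s_i$ by $s_i+cq$ and $\nu$ by $\nu+cr$ ($c\in\mathbb{Z}$). ''$B$ is the unique solution generated by $R'$ with initial conditions $R'(t)=B(t)$, $1\le t\le m$'' means: for every $n>m$, when $R'(1),\dots,R'(n-1)$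 are given, every argument at which $R'$ must be evaluated in the right-hand side for $R'(n)$ lies in $\{1,\dots,n-1\}$, so the values $R'(n)$ are uniquely determined recursively, and the resulting sequence is $R'(n)=B(n)$ for all $n\ge1$. *)

From Stdlib Require Import ZArith List Relations.
Import ListNotations.
Open Scope Z_scope.

(* Ceiling of r*n/q for q > 0 (Z.div is floor division). *)
Definition ceil_div (x q : Z) : Z := - ((- x) / q).

(* A parameter vector <s_1;a_11..a_1p1 : ... : s_k;a_k1..a_kpk | nu>:
   k = length blocks, block i = (s_i, [a_i1; ...; a_ip_i]). *)
Record PV := mkPV { blocks : list (Z * list Z); nu : Z }.

Definition sumZ (l : list Z) : Z := fold_right Z.add 0 l.

Definition outer_arg (R : Z -> Z) (n : Z) (b : Z * list Z) : Z :=
  n - fst b - sumZ (map (fun a => R (n - a)) (snd b)).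

Definition rhs (R : Z -> Z) (v : PV) (n : Z) : Z :=
  sumZ (map (fun b => R (outer_arg R n b)) (blocks v)) + nu v.

Definition args (R : Z -> Z) (v : PV) (n : Z) : list Z :=
  flat_map (fun b => outer_arg R n b :: map (fun a => n - a) (snd b)) (blocks v).

Definition formally_satisfies (B : Z -> Z) (v : PV) : Prop :=
  forall n : Z, B n = rhs B v n.

(* B is the unique solution generated by v with initial conditions
   R'(t) = B(t), 1 <= t <= m: for all n > m, (with R'(1..n-1) = B(1..n-1))
   all arguments lie in {1..n-1}, and the determined value is B(n). *)
Definition generates (v : PV) (m : Z) (B : Z -> Z) : Prop :=
  forall n : Z, n > m ->
    Forall (fun t => 1 <= t <= n - 1) (args B v n) /\ B n = rhs B v n.

Inductive pv_move (r q : Z) : PV -> PV -> Prop :=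
| move_i : forall pre s as1 a as2 post nu0 d,
    pv_move r q
      (mkPV (pre ++ (s, as1 ++ a :: as2) :: post) nu0)
      (mkPV (pre ++ (s + d * r, as1 ++ (a + d * q) :: as2) :: post) nu0)
| move_ii : forall pre s as0 post nu0 c,
    pv_move r q
      (mkPV (pre ++ (s, as0) :: post) nu0)
      (mkPV (pre ++ (s + c * q, as0) :: post) (nu0 + c * r)).

Definition pv_equiv (r q : Z) : PV -> PV -> Prop :=
  clos_refl_sym_trans PV (pv_move r q).

From Stdlib Require Import ZArith List Relations Lia.
Import ListNotations.
Open Scope Z_scope.

(* With B(n) = ceil(rn/q), the inner sum of block i is r p_i n / q + O(1), so its
   outer argument is (1 - r p_i / q) n - s_i + O(1).  Since r p_i >= 1 this is
   eventually at most n - 1, and it is eventually at least 1 when r p_i < q, or when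
   r p_i = q and s_i <= -p_i.  The last condition is reached by the move (ii) with a
   large negative c, which leaves B a formal solution because B(x + cq) = B(x) + cr. *)

Definition eventually (P : Z -> Prop) : Prop := exists M, forall n, n > M -> P n.

Lemma eventually_and (P Q : Z -> Prop) :
  eventually P -> eventually Q -> eventually (fun n => P n /\ Q n).
Proof.
  intros [M1 H1] [M2 H2]. exists (Z.max M1 M2). intros n Hn.
  split; [apply H1 | apply H2]; lia.
Qed.

Lemma eventually_forall_in {X : Type} (P : X -> Z -> Prop) (l : list X) :
  (forall x, In x l -> eventually (P x)) ->
  exists M, 0 < M /\ forall x n, In x l -> n > M -> P x n.
Proof.
  induction l as [|x l IH]; intros H.
  - exists 1. split; [lia | intros ? ? []].
  - destruct (H x (in_eq x l)) as [M1 HM1].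
    destruct IH as [M2 [HM2 HM2n]]; [intros; apply H; now right |].
    exists (Z.max M1 M2). split; [lia |].
    intros y n [<- | Hy] Hn; [apply HM1 | apply HM2n]; auto; lia.
Qed.

Lemma list_upper_bound {X : Type} (g : X -> Z) (l : list X) :
  exists C, 0 <= C /\ forall x, In x l -> g x <= C.
Proof.
  induction l as [|x l [C [HC HCl]]].
  - exists 0. split; [lia | intros ? []].
  - exists (Z.max (Z.max C (g x)) 0). split; [lia |].
    intros y [<- | Hy]; [| specialize (HCl y Hy)]; lia.
Qed.

Lemma sumZ_nonneg (l : list Z) : (forall a, In a l -> 0 <= a) -> 0 <= sumZ l.
Proof.
  induction l as [|a l IH]; simpl; [lia |].
  intros H. specialize (IH ltac:(auto)). specialize (H a (or_introl eq_refl)). lia.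
Qed.

Lemma in_le_sumZ (l : list Z) (a : Z) :
  (forall b, In b l -> 0 <= b) -> In a l -> a <= sumZ l.
Proof.
  induction l as [|b l IH]; simpl; [tauto |].
  intros H [<- | Ha].
  - pose proof (sumZ_nonneg l ltac:(auto)). lia.
  - specialize (IH ltac:(auto) Ha). specialize (H b (or_introl eq_refl)). lia.
Qed.

Definition block_args (R : Z -> Z) (n : Z) (b : Z * list Z) : list Z :=
  outer_arg R n b :: map (fun a => n - a) (snd b).

Section CeilDiv.
Variables r q : Z.
Hypothesis q_gt0 : 0 < q.

Local Notation B := (fun n => ceil_div (r * n) q).

Lemma ceil_div_bounds (x : Z) : r * x <= q * ceil_div (r * x) q <= r * x + (q - 1).
Proof.
  unfold ceil_div.
  pose proof (Z.div_mod (- (r * x)) q ltac:(lia)).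
  pose proof (Z.mod_pos_bound (- (r * x)) q q_gt0).
  lia.
Qed.

Lemma ceil_div_add_mul (x c : Z) : ceil_div (r * (x + c * q)) q = ceil_div (r * x) q + c * r.
Proof.
  unfold ceil_div.
  replace (- (r * (x + c * q))) with (- (r * x) + (- (c * r)) * q) by ring.
  rewrite Z.div_add by lia. ring.
Qed.

Lemma sum_ceil_div_bounds (n : Z) (l : list Z) :
  let S := sumZ (map (fun a => B (n - a)) l) in
  let p := Z.of_nat (length l) in
  r * (p * n - sumZ l) <= q * S <= r * (p * n - sumZ l) + p * (q - 1).
Proof.
  cbv zeta. induction l as [|a l IH]; [simpl; lia |].
  cbn [map length sumZ fold_right] in *. rewrite Nat2Z.inj_succ.
  pose proof (ceil_div_bounds (n - a)). unfold sumZ in *. nia.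
Qed.

Hypothesis r_gt0 : 0 < r.

Lemma eventually_outer_arg_le_pred (s : Z) (l : list Z) :
  l <> [] -> (forall a, In a l -> 0 < a) ->
  eventually (fun n => outer_arg B n (s, l) <= n - 1).
Proof.
  intros Hl Hpos.
  pose proof (sumZ_nonneg l ltac:(intros a Ha; specialize (Hpos a Ha); lia)) as HA.
  assert (Hp : 1 <= Z.of_nat (length l)) by (destruct l; [easy | simpl length; lia]).
  exists (q * Z.abs s + r * sumZ l + q). intros n Hn.
  pose proof (sum_ceil_div_bounds n l) as HS; cbv zeta in HS.
  unfold outer_arg; cbn [fst snd].
  set (S := sumZ (map (fun a => B (n - a)) l)) in *.
  set (p := Z.of_nat (length l)) in *.
  assert (0 <= q * Z.abs s) by nia.
  assert (0 <= r * sumZ l) by nia.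
  (* r p >= 1, so the inner sum grows at least like n / q *)
  assert (1 <= r * p) by nia.
  assert ((r * p - 1) * n >= 0) by (apply Z.le_ge, Z.mul_nonneg_nonneg; lia).
  assert (- (q * Z.abs s) <= q * s) by nia.
  assert (q * (s + S) > q) by nia.
  nia.
Qed.

Lemma eventually_outer_arg_pos (s : Z) (l : list Z) :
  (forall a, In a l -> 0 < a) ->
  r * Z.of_nat (length l) <= q ->
  s <= - Z.of_nat (length l) \/ r * Z.of_nat (length l) < q ->
  eventually (fun n => 1 <= outer_arg B n (s, l)).
Proof.
  intros Hpos Hrp Hcase.
  pose proof (sumZ_nonneg l ltac:(intros a Ha; specialize (Hpos a Ha); lia)) as HA.
  exists (q * Z.abs s + Z.of_nat (length l) * q). intros n Hn.
  pose proof (sum_ceil_div_bounds n l) as HS; cbv zeta in HS.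
  unfold outer_arg; cbn [fst snd].
  set (S := sumZ (map (fun a => B (n - a)) l)) in *.
  set (p := Z.of_nat (length l)) in *.
  assert (0 <= r * sumZ l) by nia.
  assert (0 <= p) by lia.
  assert (q * (n - s - S) > 0).
  { destruct Hcase as [Hs | Hlt].
    - assert (q * (- s - p) >= 0) by nia.
      assert ((q - r * p) * n >= 0) by nia.
      nia.
    - assert ((q - r * p - 1) * n >= 0) by nia.
      assert (q * s <= q * Z.abs s) by nia.
      nia. }
  nia.
Qed.

Lemma eventually_shifted_args (l : list Z) :
  (forall a, In a l -> 0 < a) ->
  eventually (fun n => forall a, In a l -> 1 <= n - a <= n - 1).
Proof.
  intros Hpos. exists (sumZ l). intros n Hn a Ha.
  pose proof (in_le_sumZ l a ltac:(intros b Hb; specialize (Hpos b Hb); lia) Ha).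
  specialize (Hpos a Ha). lia.
Qed.

Lemma eventually_block_args_in_range (s : Z) (l : list Z) :
  l <> [] -> (forall a, In a l -> 0 < a) ->
  r * Z.of_nat (length l) <= q ->
  s <= - Z.of_nat (length l) \/ r * Z.of_nat (length l) < q ->
  eventually (fun n => Forall (fun t => 1 <= t <= n - 1) (block_args B n (s, l))).
Proof.
  intros Hl Hpos Hrp Hcase.
  destruct (eventually_and _ _ (eventually_and _ _
              (eventually_outer_arg_pos s l Hpos Hrp Hcase)
              (eventually_outer_arg_le_pred s l Hl Hpos))
              (eventually_shifted_args l Hpos)) as [M HM].
  exists M. intros n Hn. destruct (HM n Hn) as [[Hlo Hhi] Hsh].
  constructor; [lia |]. apply Forall_map, Forall_forall. exact Hsh.
Qed.

End CeilDiv.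

Lemma generates_of_eventually (R : Z -> Z) (v : PV) :
  formally_satisfies R v ->
  (forall b, In b (blocks v) ->
     eventually (fun n => Forall (fun t => 1 <= t <= n - 1) (block_args R n b))) ->
  exists m, 0 < m /\ generates v m R.
Proof.
  intros Hf Hev.
  destruct (eventually_forall_in _ _ Hev) as [M [HM HMn]].
  exists M. split; [exact HM |]. intros n Hn. split; [| apply Hf].
  apply Forall_flat_map, Forall_forall. intros b Hb. exact (HMn b n Hb Hn).
Qed.

Section Shift.
Variables r q : Z.

Definition shift_block (c : Z) (b : Z * list Z) : Z * list Z := (fst b + c * q, snd b).

Definition shift_pv (c : Z) (v : PV) : PV :=
  mkPV (map (shift_block c) (blocks v)) (nu v + Z.of_nat (length (blocks v)) * (c * r)).

Lemma pv_equiv_shift_pv (c : Z) (v : PV) : pv_equiv r q v (shift_pv c v).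
Proof.
  destruct v as [bl nu0]. unfold shift_pv; cbn [blocks nu].
  change bl with ([] ++ bl) at 1.
  change (map (shift_block c) bl) with ([] ++ map (shift_block c) bl).
  generalize (@nil (Z * list Z)) as pre. revert nu0.
  induction bl as [|[s as0] bl IH]; intros nu0 pre.
  - simpl. rewrite Z.add_0_r. apply rst_refl.
  - eapply rst_trans; [apply rst_step, (move_ii r q pre s as0 bl nu0 c) |].
    specialize (IH (nu0 + c * r) (pre ++ [shift_block c (s, as0)])).
    rewrite <- !app_assoc in IH. cbn [app map length] in *.
    replace (nu0 + Z.of_nat (S (length bl)) * (c * r))
      with (nu0 + c * r + Z.of_nat (length bl) * (c * r)) by lia.
    exact IH.
Qed.

Variable R : Z -> Z.
Hypothesis R_add_mul : forall x c, R (x + c * q) = R x + c * r.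

Lemma rhs_shift_pv (c : Z) (v : PV) (n : Z) : rhs R (shift_pv c v) n = rhs R v n.
Proof.
  destruct v as [bl nu0]. unfold rhs, shift_pv; cbn [blocks nu].
  induction bl as [|b bl IH]; cbn [map length sumZ fold_right] in *; [lia |].
  assert (E : R (outer_arg R n (shift_block c b)) = R (outer_arg R n b) - c * r).
  { unfold outer_arg, shift_block; cbn [fst snd].
    replace (n - (fst b + c * q) - _)
      with (n - fst b - sumZ (map (fun a => R (n - a)) (snd b)) + (- c) * q) by ring.
    rewrite R_add_mul. ring. }
  unfold sumZ in *. rewrite E. lia.
Qed.

Lemma formally_satisfies_shift_pv (c : Z) (v : PV) :
  formally_satisfies R v -> formally_satisfies R (shift_pv c v).
Proof. intros Hf n. rewrite rhs_shift_pv. apply Hf. Qed.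

End Shift.

Theorem theorem4 (r q : Z) (v : PV) :
  0 < r -> 0 < q ->
  blocks v <> [] ->
  (forall b, In b (blocks v) -> snd b <> []) ->
  (forall b a, In b (blocks v) -> In a (snd b) -> 0 < a) ->
  formally_satisfies (fun n => ceil_div (r * n) q) v ->
  (forall b, In b (blocks v) -> r * Z.of_nat (length (snd b)) <= q) ->
  (exists v' : PV, pv_equiv r q v v' /\
     exists m : Z, 0 < m /\ generates v' m (fun n => ceil_div (r * n) q)) /\
  ((forall b, In b (blocks v) -> r * Z.of_nat (length (snd b)) < q) ->
     exists m : Z, 0 < m /\ generates v m (fun n => ceil_div (r * n) q)).
Proof.
  intros Hr Hq _ Hne Hpos Hf Hrp. split.
  - destruct (list_upper_bound
                (fun b : Z * list Z => Z.abs (fst b) + Z.of_nat (length (snd b)))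
                (blocks v)) as [C [HC HCb]].
    exists (shift_pv r q (- C) v). split; [apply pv_equiv_shift_pv |].
    apply generates_of_eventually.
    + apply formally_satisfies_shift_pv; [| exact Hf].
      intros x c. apply ceil_div_add_mul. exact Hq.
    + intros b' Hb'. apply in_map_iff in Hb' as [[s l] [<- Hb]].
      specialize (HCb _ Hb). cbn [fst snd shift_block] in *.
      apply (eventually_block_args_in_range r q Hq Hr).
      * exact (Hne _ Hb).
      * exact (fun a => Hpos _ a Hb).
      * exact (Hrp _ Hb).
      * left. cbn [fst snd]. assert (C <= C * q) by nia. lia.
  - intros Hlt. apply generates_of_eventually; [exact Hf |].
    intros [s l] Hb. apply (eventually_block_args_in_range r q Hq Hr).
    + exact (Hne _ Hb).
    + exact (fun a => Hpos _ a Hb).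
    + exact (Hrp _ Hb).
    + right. exact (Hlt _ Hb).
Qed.
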